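(* Let $\phi$ be the real root of $x^3=x^2+x+1$. For any positive integer $k$ and any integer $n>0.2\phi^{3k/2}$, there exists a positive tribonacci sequence of length $k$ terminating at $n$.
   Context: A tribonacci sequence of length $k$ is a sequence of integers $\langle a_i\rangle_{i=1}^k$ such that $a_i=a_{i-1}+a_{i-2}+a_{i-3}$ for all $4\le i\le k$. It terminates at $a_k$, and it is positive if $a_1,a_2,a_3>0$ (for length less than 3, all terms are required to be positive). *)

From Stdlib Require Import Reals ZArith Arith Lia.

(* A sequence <a_i>_{i=1}^k is represented by a : nat -> Z; only the
   values at indices 1..k matter. *)

Definition is_tribonacci (k : nat) (a : nat -> Z) : Prop :=
  forall i : nat, (4 <= i <= k)%nat ->
    a i = (a (i - 1)%nat + a (i - 2)%nat + a (i - 3)%nat)%Z.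

Definition positive_seq (k : nat) (a : nat -> Z) : Prop :=
  forall i : nat, (1 <= i <= Nat.min k 3)%nat -> (0 < a i)%Z.

From Stdlib Require Import Reals ZArith Arith Lia.
From Stdlib Require Import Lra Psatz Nsatz.

(** Run the recurrence backwards from a final triple (q, p, n).  Split a
    triple (x, y, z) along the eigenvectors of the tribonacci step: its
    coordinate [dom] along the left eigenvector (1, phi^2 - phi, phi) of the
    real root phi is divided by phi at each backward step, while the squared
    norm [osc] of its component in the complex eigenplane is multiplied by phi.
    A triple is positive as soon as [55 osc < dom^2].  Choosing p ~ n/phi and
    q ~ p/phi so that [osc <= 1.2] (hence [dom >= 2.7 n]), after k - 3 backward
    steps this condition becomes [66 phi^(3(k-3)) < 7.29 n^2], which follows
    from [n > phi^(3k/2) / 5] because [phi^9 > 240]. *)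

Definition unstep (v : Z * Z * Z) : Z * Z * Z :=
  let '(x, y, z) := v in ((z - y - x)%Z, x, y).

Definition backward_seq (k : nat) (v : Z * Z * Z) (i : nat) : Z :=
  snd (Nat.iter (k - i) unstep v).

Lemma backward_seq_tribonacci k v : is_tribonacci k (backward_seq k v).
Proof.
  intros i Hi; unfold backward_seq.
  replace (k - (i - 1))%nat with (S (k - i)) by lia.
  replace (k - (i - 2))%nat with (S (S (k - i))) by lia.
  replace (k - (i - 3))%nat with (S (S (S (k - i)))) by lia.
  rewrite !Nat.iter_succ.
  destruct (Nat.iter (k - i) unstep v) as [[x y] z]; simpl; lia.
Qed.

Lemma backward_seq_last k v : backward_seq k v k = snd v.
Proof. unfold backward_seq; now rewrite Nat.sub_diag. Qed.

Lemma backward_seq_positive k v x y z :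
  (3 <= k)%nat -> Nat.iter (k - 3) unstep v = (x, y, z) ->
  (0 < x)%Z -> (0 < y)%Z -> (0 < z)%Z -> positive_seq k (backward_seq k v).
Proof.
  intros Hk Hv Hx Hy Hz i Hi; rewrite Nat.min_r in Hi by lia; unfold backward_seq.
  assert (Hi3 : i = 1%nat \/ i = 2%nat \/ i = 3%nat) by lia.
  destruct Hi3 as [-> | [-> | ->]].
  - replace (k - 1)%nat with (S (S (k - 3))) by lia.
    now rewrite !Nat.iter_succ, Hv.
  - replace (k - 2)%nat with (S (k - 3)) by lia.
    now rewrite Nat.iter_succ, Hv.
  - now rewrite Hv.
Qed.

Lemma tribonacci_short k n : (k <= 3)%nat -> (0 < n)%Z ->
  exists a : nat -> Z, is_tribonacci k a /\ positive_seq k a /\ a k = n.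
Proof.
  intros Hk Hn; exists (fun _ => n); repeat split.
  - intros i Hi; lia.
  - intros i Hi; exact Hn.
Qed.

Lemma tribonacci_length4 n : (3 < n)%Z ->
  exists a : nat -> Z, is_tribonacci 4 a /\ positive_seq 4 a /\ a 4%nat = n.
Proof.
  intros Hn.
  exists (fun i : nat => match i with 1 | 2 => 1%Z | 3 => (n - 2)%Z | _ => n end).
  repeat split.
  - intros i Hi; replace i with 4%nat by lia; simpl; lia.
  - intros i Hi; destruct i as [|[|[|[|i]]]]; simpl in Hi |- *; lia.
Qed.

Open Scope R_scope.

Lemma Rpower_half_sq x j : 0 < x -> Rpower x (INR j / 2) ^ 2 = x ^ j.
Proof.
  intros hx; rewrite <- Rpower_pow by (unfold Rpower; apply exp_pos).
  rewrite Rpower_mult, <- Rpower_pow by exact hx.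
  f_equal; simpl; field.
Qed.

Lemma quad_form_nonneg A B C e1 e2 :
  0 < C -> B ^ 2 <= 4 * A * C -> 0 <= A * e1 ^ 2 + B * e1 * e2 + C * e2 ^ 2.
Proof.
  intros hC hD.
  assert (E : 4 * C * (A * e1 ^ 2 + B * e1 * e2 + C * e2 ^ 2)
              = (2 * C * e2 + B * e1) ^ 2 + (4 * A * C - B ^ 2) * e1 ^ 2) by ring.
  assert (0 <= (2 * C * e2 + B * e1) ^ 2 + (4 * A * C - B ^ 2) * e1 ^ 2).
  { apply Rplus_le_le_0_compat; [apply pow2_ge_0|].
    apply Rmult_le_pos; [lra | apply pow2_ge_0]. }
  nra.
Qed.

Lemma convex_quad_le al be ga a b x M :
  0 <= al -> a <= x <= b ->
  al * a ^ 2 + be * a + ga <= M -> al * b ^ 2 + be * b + ga <= M ->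
  al * x ^ 2 + be * x + ga <= M.
Proof.
  intros hal hx ha hb.
  destruct (Req_dec a b) as [<- | hab].
  - replace x with a by lra; exact ha.
  - assert (E : (b - a) * (al * x ^ 2 + be * x + ga)
                = (b - x) * (al * a ^ 2 + be * a + ga) + (x - a) * (al * b ^ 2 + be * b + ga)
                  - al * (x - a) * (b - x) * (b - a)) by ring.
    assert (0 <= al * (x - a) * (b - x) * (b - a)).
    { repeat apply Rmult_le_pos; lra. }
    apply Rmult_le_reg_l with (b - a); [lra|]. nra.
Qed.

Lemma abs_lt_of_sq_lt L l : 0 < l -> L ^ 2 < l ^ 2 -> - l < L < l.
Proof.
  intros hl hL; rewrite <- !Rsqr_pow2 in hL.
  apply Rsqr_lt_abs_0 in hL; rewrite (Rabs_pos_eq l) in hL by lra.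
  apply Rabs_def2 in hL; lra.
Qed.

Lemma exists_residue c r : 0 < c -> exists p : Z, 0 <= r - c * IZR p < c.
Proof.
  intros hc; exists (Int_part (r / c)).
  destruct (base_Int_part (r / c)) as [h1 h2].
  assert (E : r = c * (r / c)) by (field; lra).
  split; nra.
Qed.

Section TribonacciConstant.

Variable phi : R.
Hypothesis phi_cubic : phi ^ 3 = phi ^ 2 + phi + 1.

Lemma phi_bounds : 1.8392 < phi < 1.8393.
Proof.
  (* [(x + 0.42)^2 + 0.36] approximates the cofactor of [x - phi] in the cubic. *)
  split.
  - destruct (Rlt_or_le 1.8392 phi) as [H | H]; [exact H | exfalso].
    assert (0 <= (1.8392 - phi) * ((phi + 0.4196) ^ 2 + 0.36)) by (apply Rmult_le_pos; nra).
    nra.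
  - destruct (Rlt_or_le phi 1.8393) as [H | H]; [exact H | exfalso].
    assert (0 <= (phi - 1.8393) * ((phi + 0.41965) ^ 2 + 0.36)) by (apply Rmult_le_pos; nra).
    nra.
Qed.

Lemma phi_pow_ge c j : c <= 1.8392 ^ j -> c <= phi ^ j.
Proof.
  intros hc; apply Rle_trans with (1.8392 ^ j); [exact hc|].
  apply pow_incr; pose proof phi_bounds; lra.
Qed.

(* [osc_norm e1 e2 = |e2 - psi e1|^2] for a complex root psi of the cubic; the
   tribonacci step multiplies [e2 - psi e1] by the conjugate of psi, whose
   squared modulus is [phi^2 - phi - 1 = 1/phi]. *)
Definition osc_norm (e1 e2 : R) : R :=
  e2 ^ 2 + (phi - 1) * e1 * e2 + (phi ^ 2 - phi - 1) * e1 ^ 2.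

Definition dom (v : Z * Z * Z) : R :=
  let '(x, y, z) := v in IZR x + (phi ^ 2 - phi) * IZR y + phi * IZR z.

Definition osc (v : Z * Z * Z) : R :=
  let '(x, y, z) := v in osc_norm (IZR y - phi * IZR x) (IZR z - phi * IZR y).

Lemma dom_unstep v : dom (unstep v) * phi = dom v.
Proof.
  assert (h : phi * phi * phi = phi * phi + phi + 1) by (simpl in phi_cubic; lra).
  destruct v as [[x y] z]; simpl dom; rewrite !minus_IZR; simpl; nsatz.
Qed.

Lemma osc_unstep v : osc (unstep v) = phi * osc v.
Proof.
  assert (h : phi * phi * phi = phi * phi + phi + 1) by (simpl in phi_cubic; lra).
  destruct v as [[x y] z]; simpl osc; rewrite !minus_IZR; unfold osc_norm; simpl; nsatz.
Qed.

Lemma dom_iter_unstep m v : dom (Nat.iter m unstep v) * phi ^ m = dom v.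
Proof.
  induction m as [|m IH]; [simpl; ring|].
  rewrite Nat.iter_succ, <- IH, <- (dom_unstep (Nat.iter m unstep v)); simpl; ring.
Qed.

Lemma osc_iter_unstep m v : osc (Nat.iter m unstep v) = phi ^ m * osc v.
Proof.
  induction m as [|m IH]; [simpl; ring|].
  rewrite Nat.iter_succ, osc_unstep, IH; simpl; ring.
Qed.

Lemma sq_le_osc_norm c u w e1 e2 :
  0 < c - w ^ 2 ->
  (c * (phi - 1) - 2 * u * w) ^ 2 <= 4 * (c * (phi ^ 2 - phi - 1) - u ^ 2) * (c - w ^ 2) ->
  (u * e1 + w * e2) ^ 2 <= c * osc_norm e1 e2.
Proof.
  intros hC hD.
  pose proof (quad_form_nonneg _ _ _ e1 e2 hC hD) as H.
  unfold osc_norm; nra.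
Qed.

Lemma osc_norm_bounds e1 e2 :
  ((2 * phi ^ 2 - phi) * e1 + phi * e2) ^ 2 <= 55 * osc_norm e1 e2 /\
  (- e1 + phi ^ 2 * e2) ^ 2 <= 55 * osc_norm e1 e2 /\
  (phi * e1 + (phi + 2) * e2) ^ 2 <= 55 * osc_norm e1 e2.
Proof.
  pose proof phi_bounds as hp.
  assert (hp2 : 3.3826 <= phi ^ 2 <= 3.3831) by nra.
  repeat split.
  - apply sq_le_osc_norm; [nra|].
    assert (5.6 <= 55 * (phi ^ 2 - phi - 1) - (2 * phi ^ 2 - phi) ^ 2) by nra.
    assert (28 <= 55 * (phi - 1) - 2 * (2 * phi ^ 2 - phi) * phi <= 28.1) by nra.
    assert (51.6 <= 55 - phi ^ 2) by nra.
    nra.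
  - replace (- e1) with ((-1) * e1) by ring.
    assert (phi ^ 4 <= 11.46) by (replace (phi ^ 4) with (phi ^ 2 * phi ^ 2) by ring; nra).
    apply sq_le_osc_norm; [nra|].
    assert (28.8 <= 55 * (phi ^ 2 - phi - 1) - (-1) ^ 2) by nra.
    assert (52 <= 55 * (phi - 1) - 2 * (-1) * phi ^ 2 <= 54) by nra.
    assert (43 <= 55 - (phi ^ 2) ^ 2) by nra.
    nra.
  - apply sq_le_osc_norm; [nra|].
    assert (26 <= 55 * (phi ^ 2 - phi - 1) - phi ^ 2) by nra.
    assert (31 <= 55 * (phi - 1) - 2 * phi * (phi + 2) <= 33) by nra.
    assert (40 <= 55 - (phi + 2) ^ 2) by nra.
    nra.
Qed.

Lemma dom_decomposition x y z :
  let l := dom (x, y, z) in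
  let e1 := IZR y - phi * IZR x in
  let e2 := IZR z - phi * IZR y in
  (phi ^ 2 + 2 * phi + 3) * IZR x = l - ((2 * phi ^ 2 - phi) * e1 + phi * e2) /\
  (phi ^ 2 + 2 * phi + 3) * IZR y = phi * l - (- e1 + phi ^ 2 * e2) /\
  (phi ^ 2 + 2 * phi + 3) * IZR z = phi ^ 2 * l + (phi * e1 + (phi + 2) * e2).
Proof.
  assert (h : phi * phi * phi = phi * phi + phi + 1) by (simpl in phi_cubic; lra).
  simpl; repeat split; nsatz.
Qed.

Lemma positive_of_dominant x y z :
  0 < dom (x, y, z) -> 55 * osc (x, y, z) < dom (x, y, z) ^ 2 ->
  (0 < x /\ 0 < y /\ 0 < z)%Z.
Proof.
  pose proof phi_bounds as hp.
  destruct (dom_decomposition x y z) as [Dx [Dy Dz]].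
  simpl osc; set (l := dom (x, y, z)) in *.
  set (e1 := IZR y - phi * IZR x) in *; set (e2 := IZR z - phi * IZR y) in *.
  destruct (osc_norm_bounds e1 e2) as [Bx [By Bz]].
  intros hl hq.
  assert (l ^ 2 <= (phi * l) ^ 2) by nra.
  assert ((phi * l) ^ 2 <= (phi ^ 2 * l) ^ 2) by nra.
  assert (Lx := abs_lt_of_sq_lt ((2 * phi ^ 2 - phi) * e1 + phi * e2) l ltac:(lra) ltac:(lra)).
  assert (Ly := abs_lt_of_sq_lt (- e1 + phi ^ 2 * e2) (phi * l) ltac:(nra) ltac:(lra)).
  assert (Lz := abs_lt_of_sq_lt (phi * e1 + (phi + 2) * e2) (phi ^ 2 * l) ltac:(nra) ltac:(lra)).
  assert (0 < phi ^ 2 + 2 * phi + 3) by nra.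
  repeat split; apply lt_IZR; nra.
Qed.

Lemma dominance_iter_unstep m v :
  0 < dom v -> 55 * phi ^ (3 * m) * osc v < dom v ^ 2 ->
  0 < dom (Nat.iter m unstep v) /\
  55 * osc (Nat.iter m unstep v) < dom (Nat.iter m unstep v) ^ 2.
Proof.
  intros hl hq.
  pose proof (dom_iter_unstep m v) as HL; pose proof (osc_iter_unstep m v) as HQ.
  set (w := Nat.iter m unstep v) in *.
  assert (X0 : 0 < phi ^ m) by (apply pow_lt; pose proof phi_bounds; lra).
  rewrite Nat.mul_comm, pow_mult in hq.
  split.
  - apply Rmult_lt_reg_r with (phi ^ m); lra.
  - apply Rmult_lt_reg_r with ((phi ^ m) ^ 2); [nra|].
    rewrite HQ, <- Rpow_mult_distr, HL; nra.
Qed.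

Lemma osc_norm_le_corners e1 e2 a b c d :
  a <= e1 <= b -> c <= e2 <= d ->
  osc_norm a c <= 1.2 -> osc_norm a d <= 1.2 ->
  osc_norm b c <= 1.2 -> osc_norm b d <= 1.2 ->
  osc_norm e1 e2 <= 1.2.
Proof.
  pose proof phi_bounds as hp.
  assert (hP : 0 <= phi ^ 2 - phi - 1) by nra.
  unfold osc_norm; intros h1 h2 ac ad bc bd.
  assert (Along : forall e,
    c ^ 2 + (phi - 1) * e * c + (phi ^ 2 - phi - 1) * e ^ 2 <= 1.2 ->
    d ^ 2 + (phi - 1) * e * d + (phi ^ 2 - phi - 1) * e ^ 2 <= 1.2 ->
    e2 ^ 2 + (phi - 1) * e * e2 + (phi ^ 2 - phi - 1) * e ^ 2 <= 1.2).
  { intros e hc hd.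
    pose proof (convex_quad_le 1 ((phi - 1) * e) ((phi ^ 2 - phi - 1) * e ^ 2) c d e2 1.2
                  ltac:(lra) h2 ltac:(lra) ltac:(lra)); lra. }
  pose proof (convex_quad_le (phi ^ 2 - phi - 1) ((phi - 1) * e2) (e2 ^ 2) a b e1 1.2
                hP h1 ltac:(specialize (Along a ac ad); lra)
                ltac:(specialize (Along b bc bd); lra)).
  lra.
Qed.

(* The square [0, phi)^2 of residues is covered by five boxes; on each one a
   correction among (0,0), (0,1), (1,0), (1,1) moves the box into the region
   [osc_norm <= 1.2], as checked at its four corners. *)
Lemma osc_norm_small_correction f g :
  0 <= f < phi -> 0 <= g < phi ->
  exists dp dq : Z, osc_norm (g + IZR dp - phi * IZR dq) (f - phi * IZR dp) <= 1.2.
Proof.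
  intros hf hg.
  pose proof phi_bounds as hp.
  assert (3.3826 <= phi ^ 2 <= 3.3831) by nra.
  destruct (Rle_or_lt f 0.65) as [F0 | F0]; [destruct (Rle_or_lt g 0.45) as [G0 | G0] |].
  - exists 0%Z, 0%Z.
    apply osc_norm_le_corners with 0 0.45 0 0.65; simpl; try lra; unfold osc_norm; nra.
  - exists 0%Z, 1%Z.
    apply osc_norm_le_corners with (-1.3893) 0 0 0.65; simpl; try lra; unfold osc_norm; nra.
  - destruct (Rle_or_lt g 0.35) as [G0 | G0]; [|destruct (Rle_or_lt f 1.05) as [F1 | F1]].
    + exists 1%Z, 0%Z.
      apply osc_norm_le_corners with 1 1.35 (-1.1893) 0; simpl; try lra; unfold osc_norm; nra.
    + exists 0%Z, 1%Z.
      apply osc_norm_le_corners with (-1.4893) 0 0.65 1.05; simpl; try lra; unfold osc_norm; nra.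
    + exists 1%Z, 1%Z.
      apply osc_norm_le_corners with (-0.4893) 1 (-0.7893) 0; simpl; try lra; unfold osc_norm; nra.
Qed.

Lemma exists_start_triple n : exists p q : Z, osc (q, p, n) <= 1.2.
Proof.
  pose proof phi_bounds as hp.
  destruct (exists_residue phi (IZR n)) as [p0 Hf]; [lra|].
  destruct (exists_residue phi (IZR p0)) as [q0 Hg]; [lra|].
  destruct (osc_norm_small_correction _ _ Hf Hg) as [dp [dq H]].
  exists (p0 + dp)%Z, (q0 + dq)%Z; simpl osc; rewrite !plus_IZR.
  replace (IZR p0 + IZR dp - phi * (IZR q0 + IZR dq))
    with (IZR p0 - phi * IZR q0 + IZR dp - phi * IZR dq) by ring.
  replace (IZR n - phi * (IZR p0 + IZR dp)) with (IZR n - phi * IZR p0 - phi * IZR dp) by ring.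
  exact H.
Qed.

Lemma dom_start_lower_bound q p n :
  10 <= IZR n -> osc (q, p, n) <= 1.2 -> 2.7 * IZR n <= dom (q, p, n).
Proof.
  intros hn hq.
  pose proof phi_bounds as hp.
  assert (3.3826 <= phi ^ 2 <= 3.3831) by nra.
  destruct (dom_decomposition q p n) as [_ [_ Dz]].
  simpl osc in hq; set (l := dom (q, p, n)) in *.
  set (e1 := IZR p - phi * IZR q) in *; set (e2 := IZR n - phi * IZR p) in *.
  destruct (osc_norm_bounds e1 e2) as [_ [_ Bz]].
  assert (phi * e1 + (phi + 2) * e2 <= 9) by nra.
  nra.
Qed.

Lemma exists_dominant_triple m n :
  (2 <= m)%nat -> phi ^ (3 * (m + 3)) < 25 * IZR n ^ 2 -> 0 < IZR n ->
  exists v, snd v = n /\ 0 < dom v /\ 55 * phi ^ (3 * m) * osc v < dom v ^ 2.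
Proof.
  intros hm hn npos.
  pose proof phi_bounds as hp.
  rewrite Nat.mul_add_distr_l, pow_add in hn; change (3 * 3)%nat with 9%nat in hn.
  pose proof (phi_pow_ge 240 9 ltac:(simpl; lra)) as h9.
  assert (h6 : 38 <= phi ^ (3 * m)).
  { apply Rle_trans with (phi ^ 6); [apply phi_pow_ge; simpl; lra|].
    apply Rle_pow; lra || lia. }
  set (X := phi ^ (3 * m)) in *.
  assert (n10 : 10 <= IZR n) by nra.
  destruct (exists_start_triple n) as [p [q Hq]].
  pose proof (dom_start_lower_bound q p n n10 Hq) as Hl.
  exists (q, p, n); repeat split; [lra|].
  assert (55 * X * osc (q, p, n) <= 66 * X) by nra.
  assert ((2.7 * IZR n) ^ 2 <= dom (q, p, n) ^ 2) by nra.
  nra.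
Qed.

End TribonacciConstant.

Theorem theorem3 (phi : R) (hphi : (phi ^ 3 = phi ^ 2 + phi + 1)%R)
  (k : nat) (hk : (0 < k)%nat) (n : Z)
  (hn : (IZR n > (1 / 5) * Rpower phi (3 * INR k / 2))%R) :
  exists a : nat -> Z,
    is_tribonacci k a /\ positive_seq k a /\ a k = n.
Proof.
  pose proof (phi_bounds phi hphi) as hp.
  assert (Hpow : 0 < Rpower phi (3 * INR k / 2)) by (unfold Rpower; apply exp_pos).
  assert (npos : 0 < IZR n) by lra.
  assert (Hsq : phi ^ (3 * k) < 25 * IZR n ^ 2).
  { rewrite <- (Rpower_half_sq phi (3 * k)) by lra.
    replace (INR (3 * k) / 2) with (3 * INR k / 2) by (rewrite mult_INR; simpl; field).
    nra. }
  assert (Hcases : (k <= 3 \/ k = 4 \/ 5 <= k)%nat) by lia.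
  destruct Hcases as [Hk3 | [-> | Hk5]].
  - apply tribonacci_short; [exact Hk3 | now apply lt_IZR].
  - apply tribonacci_length4, lt_IZR.
    pose proof (phi_pow_ge phi hphi 1400 12 ltac:(simpl; lra)).
    change (3 * 4)%nat with 12%nat in Hsq; nra.
  - replace k with ((k - 3) + 3)%nat in Hsq by lia.
    destruct (exists_dominant_triple phi hphi (k - 3) n ltac:(lia) Hsq npos) as [v [Hv [Hl Hq]]].
    destruct (dominance_iter_unstep phi hphi (k - 3) v Hl Hq) as [Hl' Hq'].
    destruct (Nat.iter (k - 3) unstep v) as [[x y] z] eqn:Hw.
    destruct (positive_of_dominant phi hphi x y z Hl' Hq') as [Hx [Hy Hz]].
    exists (backward_seq k v); split; [|split].
    + apply backward_seq_tribonacci.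
    + apply (backward_seq_positive k v x y z); [lia | exact Hw | ..]; assumption.
    + rewrite backward_seq_last; exact Hv.
Qed.
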